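(* Let $\mathcal P$ be a Fitting program over a bilattice $\mathcal B$. Then $Fix^{\mathcal U}_{\mathcal U}\le_k Fix^{\mathcal F}_{\mathcal U}$ and $Fix^{\mathcal U}_{\mathcal U}\le_k Fix^{\mathcal T}_{\mathcal U}$.
   Context: A bilattice $\langle\mathcal B,\le_t,\le_k\rangle$ is a nonempty set with two partial orders, each making $\mathcal B$ a lattice with top and bottom. Under $\le_t$, meet and join are $\wedge,\vee$ (infinitary $\bigwedge,\bigvee$), bottom $\mathcal F$, top $\mathcal T$; under $\le_k$, meet and join are $\otimes,\oplus$ (infinitary $\bigotimes,\bigoplus$), bottom $\mathcal U$, top $\mathcal I$. Standing assumptions: $\mathcal B$ is complete for both orders, infinitely distributive, satisfies the infinitary interlacing conditions, and has a negation $\neg$ (an involution reversing $\le_t$ and preserving $\le_k$). A formula is built from literals ($A$ or $\neg A$) and elements of $\mathcal B$ using $\wedge,\vee,\otimes,\oplus,\exists,\forall$ (with built-in predicate $equal$). A clause is $P(x_1,\dots,x_n)\leftarrow\phi(x_1,\dots,x_n)$ with the body's free variables among $x_1,\dots,x_n$. A Fitting program is a finite set of clauses with no predicate letter heading more than one clause; Inst-$\mathcal P$ is its set of ground instances. $\mathcal V(\mathcal B)$: maps from ground atoms to $\mathcal B$ with pointwise orders/operations. Valuations extend to closed formulas compositionally ($v(\beta)=\beta$, connectives pointwise, $\exists$ as $\bigvee$, $\forall$ as $\bigwedge$ over closed-term instances, $v(equal(s,t))=\mathcal T$ if $s=t$ else $\mathcal F$). The contrajoin $v\bigtriangleup w$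 evaluates likewise but gives $A$ the value $v(A)$ and $\neg A$ the value $\neg w(A)$. For $\alpha\in\{\mathcal F,\mathcal T,\mathcal U,\mathcal I\}$: $\Psi_{\mathcal P}^{\alpha}(v,w)(A)=\alpha$ if $A$ heads no member of Inst-$\mathcal P$, and $=(v\bigtriangleup w)(B)$ if $A\leftarrow B\in$ Inst-$\mathcal P$. $\Psi'^{\alpha}_{\mathcal P}(v)$ is the $\le_t$-least (resp. $\le_t$-greatest, $\le_k$-least, $\le_k$-greatest) fixpoint of $x\mapsto\Psi_{\mathcal P}^{\alpha}(x,v)$ when $\alpha=\mathcal F$ (resp. $\mathcal T,\mathcal U,\mathcal I$), obtained as the limit of the transfinite iteration from the constant valuation $\alpha$. $Fix^{\alpha}_{\mathcal U}$ denotes the $\le_k$-least fixpoint of $\Psi'^{\alpha}_{\mathcal P}$. *)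

From Stdlib Require Import List Arith ClassicalEpsilon.
Import ListNotations.
Set Implicit Arguments.
Unset Strict Implicit.

Inductive bop := Tmeet | Tjoin | Kmeet | Kjoin.
Inductive border := OrdT | OrdK.

Record Bilattice := {
  car :> Type;
  le_t : car -> car -> Prop;
  le_k : car -> car -> Prop;
  bigTmeet : forall I : Type, (I -> car) -> car;
  bigTjoin : forall I : Type, (I -> car) -> car;
  bigKmeet : forall I : Type, (I -> car) -> car;
  bigKjoin : forall I : Type, (I -> car) -> car;
  neg : car -> car
}.

Definition big (B : Bilattice) (o : bop) : forall I : Type, (I -> B) -> B :=
  match o with
  | Tmeet => @bigTmeet B | Tjoin => @bigTjoin B
  | Kmeet => @bigKmeet B | Kjoin => @bigKjoin B
  end.

Definition bin (B : Bilattice) (o : bop) (a b : B) : B :=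
  big o (fun x : bool => if x then a else b).

Definition le_of (B : Bilattice) (r : border) : B -> B -> Prop :=
  match r with OrdT => @le_t B | OrdK => @le_k B end.

Definition bF (B : Bilattice) : B := bigTjoin (fun e : Empty_set => match e with end).
Definition bT (B : Bilattice) : B := bigTmeet (fun e : Empty_set => match e with end).
Definition bU (B : Bilattice) : B := bigKjoin (fun e : Empty_set => match e with end).
Definition bI (B : Bilattice) : B := bigKmeet (fun e : Empty_set => match e with end).

Definition partial_order (X : Type) (le : X -> X -> Prop) : Prop :=
  (forall x, le x x) /\ (forall x y z, le x y -> le y z -> le x z) /\
  (forall x y, le x y -> le y x -> x = y).

Definition is_glb (X : Type) (le : X -> X -> Prop) (I : Type) (f : I -> X) (m : X) :=
  (forall i, le m (f i)) /\ (forall y, (forall i, le y (f i)) -> le y m).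
Definition is_lub (X : Type) (le : X -> X -> Prop) (I : Type) (f : I -> X) (m : X) :=
  (forall i, le (f i) m) /\ (forall y, (forall i, le (f i) y) -> le m y).

Definition bilattice_axioms (B : Bilattice) : Prop :=
  partial_order (@le_t B) /\ partial_order (@le_k B) /\
  (forall (I : Type) (f : I -> B), is_glb (@le_t B) f (bigTmeet f)) /\
  (forall (I : Type) (f : I -> B), is_lub (@le_t B) f (bigTjoin f)) /\
  (forall (I : Type) (f : I -> B), is_glb (@le_k B) f (bigKmeet f)) /\
  (forall (I : Type) (f : I -> B), is_lub (@le_k B) f (bigKjoin f)) /\
  (forall (o1 o2 : bop) (a : B) (I : Type) (f : I -> B), inhabited I ->
      bin o1 a (big o2 f) = big o2 (fun i => bin o1 a (f i))) /\
  (forall (o : bop) (r : border) (I : Type) (f g : I -> B),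
      (forall i, le_of r (f i) (g i)) -> le_of r (big o f) (big o g)) /\
  (forall a : B, neg (neg a) = a) /\
  (forall a b : B, le_t a b -> le_t (neg b) (neg a)) /\
  (forall a b : B, le_k a b -> le_k (neg a) (neg b)).

Record Signature := {
  Fn : Type;
  farity : Fn -> nat;
  Pr : Type;           (* predicate letters (other than the built-in equal) *)
  parity : Pr -> nat
}.

Inductive term (S : Signature) : Type :=
| Var : nat -> term S
| App : Fn S -> list (term S) -> term S.
Arguments Var {S} _.
Arguments App {S} _ _.

Inductive wft (S : Signature) : term S -> Prop :=
| wft_var : forall x, wft (Var x)
| wft_app : forall f ts, length ts = farity f -> Forall (@wft S) ts -> wft (App f ts).

Inductive cterm (S : Signature) : term S -> Prop :=
| cterm_app : forall f ts, length ts = farity f -> Forall (@cterm S) ts -> cterm (App f ts).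

Definition HU (S : Signature) := { t : term S | cterm t }.

Definition gatom (S : Signature) :=
  { p : Pr S * list (term S) | length (snd p) = parity (fst p) /\ Forall (@cterm S) (snd p) }.

Fixpoint tsubst (S : Signature) (e : nat -> term S) (t : term S) : term S :=
  match t with
  | Var x => e x
  | App f ts => App f (map (tsubst e) ts)
  end.

Definition upd (S : Signature) (e : nat -> term S) (x : nat) (t : term S) : nat -> term S :=
  fun y => if Nat.eqb y x then t else e y.

(* formulas; the boolean in FAtom/FEq is the sign of the literal
   (true: A, false: ~A) *)
Inductive formula (S : Signature) (C : Type) : Type :=
| FAtom : bool -> Pr S -> list (term S) -> formula S C
| FEq : bool -> term S -> term S -> formula S C
| FConst : C -> formula S C
| FAnd : formula S C -> formula S C -> formula S C
| FOr : formula S C -> formula S C -> formula S C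
| FOtimes : formula S C -> formula S C -> formula S C
| FOplus : formula S C -> formula S C -> formula S C
| FEx : nat -> formula S C -> formula S C
| FAll : nat -> formula S C -> formula S C.
Arguments FAtom {S C} _ _ _.
Arguments FEq {S C} _ _ _.
Arguments FConst {S C} _.
Arguments FAnd {S C} _ _.
Arguments FOr {S C} _ _.
Arguments FOtimes {S C} _ _.
Arguments FOplus {S C} _ _.
Arguments FEx {S C} _ _.
Arguments FAll {S C} _ _.

Fixpoint tvars_in (S : Signature) (ok : nat -> Prop) (t : term S) : Prop :=
  match t with
  | Var x => ok x
  | App _ ts => (fix go (l : list (term S)) : Prop :=
                   match l with nil => True | t :: l => tvars_in ok t /\ go l end) ts
  end.

Fixpoint fv_in (S : Signature) (C : Type) (ok : nat -> Prop) (phi : formula S C) : Prop :=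
  match phi with
  | FAtom _ _ ts => Forall (tvars_in ok) ts
  | FEq _ t1 t2 => tvars_in ok t1 /\ tvars_in ok t2
  | FConst _ => True
  | FAnd p q | FOr p q | FOtimes p q | FOplus p q => fv_in ok p /\ fv_in ok q
  | FEx x p | FAll x p => fv_in (fun y => y = x \/ ok y) p
  end.

Fixpoint wf_formula (S : Signature) (C : Type) (phi : formula S C) : Prop :=
  match phi with
  | FAtom _ P ts => length ts = parity P /\ Forall (@wft S) ts
  | FEq _ t1 t2 => wft t1 /\ wft t2
  | FConst _ => True
  | FAnd p q | FOr p q | FOtimes p q | FOplus p q => wf_formula p /\ wf_formula q
  | FEx _ p | FAll _ p => wf_formula p
  end.

Definition valuation (B : Bilattice) (S : Signature) := gatom S -> B.

Definition vle (B : Bilattice) (S : Signature) (r : border) (v w : valuation B S) : Prop :=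
  forall A, le_of r (v A) (w A).

(* value of the atom P(ts) under v (ts closed); junk value U if P(ts) is
   not a ground atom, which never happens for well-formed programs *)
Definition look (B : Bilattice) (S : Signature) (v : valuation B S)
    (P : Pr S) (ts : list (term S)) : B :=
  match excluded_middle_informative
          (length ts = parity P /\ Forall (@cterm S) ts) with
  | left h => v (exist _ (P, ts) h)
  | right _ => bU B
  end.

(* (v contrajoin w)(phi[e]) : positive literals A get v(A), negative ones
   ~A get ~w(A); the ordinary valuation v(phi) is contrajoin v v. *)
Fixpoint contrajoin (B : Bilattice) (S : Signature) (v w : valuation B S)
    (e : nat -> term S) (phi : formula S B) : B :=
  match phi with
  | FAtom true P ts => look v P (map (tsubst e) ts)
  | FAtom false P ts => neg (look w P (map (tsubst e) ts))
  | FEq s t1 t2 =>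
      let b := if excluded_middle_informative (tsubst e t1 = tsubst e t2)
               then bT B else bF B in
      if s then b else neg b
  | FConst c => c
  | FAnd p q => bin Tmeet (contrajoin v w e p) (contrajoin v w e q)
  | FOr p q => bin Tjoin (contrajoin v w e p) (contrajoin v w e q)
  | FOtimes p q => bin Kmeet (contrajoin v w e p) (contrajoin v w e q)
  | FOplus p q => bin Kjoin (contrajoin v w e p) (contrajoin v w e q)
  | FEx x p => bigTjoin (fun t : HU S => contrajoin v w (upd e x (proj1_sig t)) p)
  | FAll x p => bigTmeet (fun t : HU S => contrajoin v w (upd e x (proj1_sig t)) p)
  end.

(* clause  P(x1,...,xn) <- phi(x1,...,xn) *)
Record clause (B : Bilattice) (S : Signature) := {
  chead : Pr S;
  cvars : list nat;
  cbody : formula S B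
}.

Definition wf_clause (B : Bilattice) (S : Signature) (c : clause B S) : Prop :=
  NoDup (cvars c) /\ length (cvars c) = parity (chead c) /\
  wf_formula (cbody c) /\ fv_in (fun y => In y (cvars c)) (cbody c).

Definition fitting_program (B : Bilattice) (S : Signature) (prog : list (clause B S)) : Prop :=
  Forall (@wf_clause B S) prog /\ NoDup (map (@chead B S) prog).

Fixpoint find_clause (B : Bilattice) (S : Signature) (prog : list (clause B S)) (P : Pr S)
    : option (clause B S) :=
  match prog with
  | nil => None
  | c :: prog' =>
      if excluded_middle_informative (chead c = P) then Some c else find_clause prog' P
  end.

Fixpoint bind (S : Signature) (xs : list nat) (ts : list (term S)) (y : nat) : term S :=
  match xs, ts with
  | x :: xs', t :: ts' => if Nat.eqb y x then t else bind xs' ts' y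
  | _, _ => Var y
  end.

Inductive alpha := aF | aT | aU | aI.

Definition alpha_val (B : Bilattice) (a : alpha) : B :=
  match a with aF => bF B | aT => bT B | aU => bU B | aI => bI B end.

Definition Psi (B : Bilattice) (S : Signature) (prog : list (clause B S)) (a : alpha)
    (v w : valuation B S) : valuation B S :=
  fun A =>
    match find_clause prog (fst (proj1_sig A)) with
    | Some c => contrajoin v w (bind (cvars c) (snd (proj1_sig A))) (cbody c)
    | None => alpha_val B a
    end.

Definition is_fix (B : Bilattice) (S : Signature) (f : valuation B S -> valuation B S)
    (x : valuation B S) : Prop := forall A, f x A = x A.

Definition Psi'_is (B : Bilattice) (S : Signature) (prog : list (clause B S)) (a : alpha)
    (v x : valuation B S) : Prop :=
  let f := fun y => Psi prog a y v in
  is_fix f x /\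
  forall y, is_fix f y ->
    match a with
    | aF => vle OrdT x y
    | aT => vle OrdT y x
    | aU => vle OrdK x y
    | aI => vle OrdK y x
    end.

Definition Fix_U (B : Bilattice) (S : Signature) (prog : list (clause B S)) (a : alpha)
    (z : valuation B S) : Prop :=
  Psi'_is prog a z z /\ forall v, Psi'_is prog a v v -> vle OrdK z v.

(* A least fixpoint is the join of all elements lying in every set closed
   under the operator and under arbitrary joins (the limit of the transfinite
   iteration from the bottom).  This yields a fixpoint-induction principle,
   and running it on two operators at once (in the product lattice) shows
   that a least fixpoint computed in one order is monotone for any second
   order that is respected by the joins and by the operators.  By
   interlacing, this makes each Psi'^alpha monotone for <=_k, so the
   <=_k-least fixpoints Fix^alpha_U exist.  Finally U is the <=_k-bottom, so
   Psi^U <=_k Psi^alpha pointwise: Fix^alpha_U is then a <=_k-prefixpoint of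
   Psi'^U, whence Fix^U_U <=_k Fix^alpha_U. *)

From Stdlib Require Import FunctionalExtensionality ClassicalEpsilon.

Definition complete_lattice (X : Type) (le : X -> X -> Prop)
    (join : forall I : Type, (I -> X) -> X) : Prop :=
  partial_order le /\ forall (I : Type) (f : I -> X), is_lub le f (join I f).
Arguments complete_lattice {X} le join.

Section LeastFixpoint.
Variables (X : Type) (le : X -> X -> Prop) (join : forall I : Type, (I -> X) -> X).

Definition fixpoint_closed (f : X -> X) (D : X -> Prop) : Prop :=
  (forall x, D x -> D (f x)) /\
  (forall (I : Type) (g : I -> X), (forall i, D (g i)) -> D (join I g)).

Definition in_fixpoint_closure (f : X -> X) (x : X) : Prop :=
  forall D, fixpoint_closed f D -> D x.

Definition lfp (f : X -> X) : X :=
  join _ (fun p : {x | in_fixpoint_closure f x} => proj1_sig p).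

Lemma lfp_ind (f : X -> X) (D : X -> Prop) : fixpoint_closed f D -> D (lfp f).
Proof. intros HD. apply (proj2 HD). intros [x Hx]. exact (Hx D HD). Qed.

Lemma fixpoint_closed_closure (f : X -> X) :
  fixpoint_closed f (in_fixpoint_closure f).
Proof.
  split.
  - intros x Hx D HD. apply (proj1 HD), Hx, HD.
  - intros I g Hg D HD. apply (proj2 HD). intro i. apply Hg, HD.
Qed.

Hypothesis HX : complete_lattice le join.
Variable f : X -> X.
Hypothesis f_mono : forall x y, le x y -> le (f x) (f y).

Lemma lfp_least (p : X) : le (f p) p -> le (lfp f) p.
Proof.
  destruct HX as [[_ [le_trans _]] Hlub].
  intro Hp. apply (lfp_ind f (fun x => le x p)). split.
  - intros x Hx. exact (le_trans _ _ _ (f_mono x p Hx) Hp).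
  - intros I g Hg. apply (proj2 (Hlub I g)), Hg.
Qed.

Lemma lfp_fixed : lfp f = f (lfp f).
Proof.
  destruct HX as [[_ [le_trans le_antisym]] Hlub].
  apply le_antisym.
  - apply (lfp_ind f (fun x => le x (f x))). split.
    + intros x Hx. apply f_mono, Hx.
    + intros I g Hg. apply (proj2 (Hlub I g)). intro i.
      apply (le_trans _ _ _ (Hg i)), f_mono, (proj1 (Hlub I g)).
  - assert (Hcl : in_fixpoint_closure f (f (lfp f))).
    { apply (proj1 (fixpoint_closed_closure f)), lfp_ind, fixpoint_closed_closure. }
    exact (proj1 (Hlub _ _) (exist _ _ Hcl)).
Qed.

End LeastFixpoint.

Arguments lfp {X} join f.
Arguments lfp_least {X le join} HX f f_mono p.
Arguments lfp_fixed {X le join} HX f f_mono.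

Section Product.
Variables (X Y : Type) (leX : X -> X -> Prop) (leY : Y -> Y -> Prop).
Variables (joinX : forall I : Type, (I -> X) -> X) (joinY : forall I : Type, (I -> Y) -> Y).
Hypotheses (HX : complete_lattice leX joinX) (HY : complete_lattice leY joinY).

Definition prod_le (p q : X * Y) : Prop := leX (fst p) (fst q) /\ leY (snd p) (snd q).

Definition prod_join (I : Type) (h : I -> X * Y) : X * Y :=
  (joinX I (fun i => fst (h i)), joinY I (fun i => snd (h i))).

Lemma complete_lattice_prod : complete_lattice prod_le prod_join.
Proof.
  destruct HX as [[reflX [transX antisymX]] lubX].
  destruct HY as [[reflY [transY antisymY]] lubY].
  split; [split; [| split] |].
  - intros p. split; [apply reflX | apply reflY].
  - intros p q r [H1 H2] [H3 H4]. split; eauto.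
  - intros [x y] [x' y'] [H1 H2] [H3 H4]. simpl in *. f_equal; auto.
  - intros I h. split.
    + intro i. split; [apply (proj1 (lubX I (fun i => fst (h i))))
                      | apply (proj1 (lubY I (fun i => snd (h i))))].
    + intros p Hp. split; [apply (proj2 (lubX I (fun i => fst (h i))))
                          | apply (proj2 (lubY I (fun i => snd (h i))))];
        intro i; apply Hp.
Qed.

Variables (f : X -> X) (g : Y -> Y).
Hypotheses (f_mono : forall x x', leX x x' -> leX (f x) (f x'))
           (g_mono : forall y y', leY y y' -> leY (g y) (g y')).

Lemma lfp_prod :
  lfp prod_join (fun p => (f (fst p), g (snd p))) = (lfp joinX f, lfp joinY g).
Proof.
  set (h := fun p : X * Y => (f (fst p), g (snd p))).
  assert (h_mono : forall p q, prod_le p q -> prod_le (h p) (h q)).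
  { intros p q [H1 H2]. split; simpl; auto. }
  pose proof (lfp_fixed complete_lattice_prod h h_mono) as Hfix.
  destruct complete_lattice_prod as [[_ [_ antisym]] _].
  destruct HX as [[reflX _] _]; destruct HY as [[reflY _] _].
  apply antisym.
  - apply (lfp_least complete_lattice_prod h h_mono). unfold h; simpl.
    rewrite <- (lfp_fixed HX f f_mono), <- (lfp_fixed HY g g_mono).
    split; simpl; auto.
  - set (L := lfp prod_join h) in *.
    assert (Ef : f (fst L) = fst L) by (rewrite Hfix at 2; reflexivity).
    assert (Eg : g (snd L) = snd L) by (rewrite Hfix at 2; reflexivity).
    split.
    + apply (lfp_least HX f f_mono). rewrite Ef. apply reflX.
    + apply (lfp_least HY g g_mono). rewrite Eg. apply reflY.
Qed.

Lemma lfp_ind2 (R : X -> Y -> Prop) :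
  (forall x y, R x y -> R (f x) (g y)) ->
  (forall (I : Type) (a : I -> X) (b : I -> Y),
      (forall i, R (a i) (b i)) -> R (joinX I a) (joinY I b)) ->
  R (lfp joinX f) (lfp joinY g).
Proof.
  intros Hstep Hjoin.
  assert (HR : (fun p => R (fst p) (snd p))
                 (lfp prod_join (fun p => (f (fst p), g (snd p))))).
  { apply lfp_ind. split.
    - intros p Hp. apply Hstep, Hp.
    - intros I h Hh. apply Hjoin, Hh. }
  rewrite lfp_prod in HR. exact HR.
Qed.

End Product.

Arguments lfp_ind2 {X Y leX leY joinX joinY} HX HY {f g} f_mono g_mono R.

Section Pointwise.
Variables (A X : Type) (le : X -> X -> Prop) (join : forall I : Type, (I -> X) -> X).

Definition pointwise (v w : A -> X) : Prop := forall a, le (v a) (w a).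

Definition pointwise_join (I : Type) (g : I -> A -> X) : A -> X :=
  fun a => join I (fun i => g i a).

Lemma complete_lattice_pointwise :
  complete_lattice le join -> complete_lattice pointwise pointwise_join.
Proof.
  intros [[refl [trans antisym]] lub]. repeat split.
  - intros v a. apply refl.
  - intros u v w H1 H2 a. eauto.
  - intros v w H1 H2. extensionality a. auto.
  - intros i a. apply (proj1 (lub I (fun i => f i a))).
  - intros w Hw a. apply (proj2 (lub I (fun i => f i a))). intro i. apply Hw.
Qed.

End Pointwise.

Arguments pointwise {A X} le v w.
Arguments pointwise_join {A X} join I g a.
Arguments complete_lattice_pointwise A {X le join}.

Lemma complete_lattice_dual (X : Type) (le : X -> X -> Prop)
    (meet : forall I : Type, (I -> X) -> X) :
  partial_order le -> (forall (I : Type) (f : I -> X), is_glb le f (meet I f)) ->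
  complete_lattice (fun x y => le y x) meet.
Proof.
  intros [refl [trans antisym]] glb. repeat split; eauto.
  - intros i. apply (proj1 (glb I f)).
  - apply (proj2 (glb I f)).
Qed.

Section FittingSemantics.
Variables (B : Bilattice) (S : Signature) (prog : list (clause B S)).
Hypothesis HB : bilattice_axioms B.

Lemma le_of_refl (r : border) (x : B) : le_of r x x.
Proof. destruct HB as [[reflt _] [[reflk _] _]]. destruct r; simpl; auto. Qed.

Lemma big_mono (o : bop) (r : border) (I : Type) (f g : I -> B) :
  (forall i, le_of r (f i) (g i)) -> le_of r (big o f) (big o g).
Proof. destruct HB as [_ [_ [_ [_ [_ [_ [_ [interlacing _]]]]]]]]. apply interlacing. Qed.

Lemma bin_mono (o : bop) (r : border) (x y x' y' : B) :
  le_of r x x' -> le_of r y y' -> le_of r (bin o x y) (bin o x' y').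
Proof. intros H1 H2. apply big_mono. intros []; assumption. Qed.

Lemma neg_mono_k (x y : B) : le_k x y -> le_k (neg x) (neg y).
Proof. destruct HB as [_ [_ [_ [_ [_ [_ [_ [_ [_ [_ h]]]]]]]]]]. apply h. Qed.

Lemma bU_least (x : B) : le_k (bU B) x.
Proof.
  destruct HB as [_ [_ [_ [_ [_ [lubk _]]]]]].
  apply (proj2 (lubk _ _)). intros [].
Qed.

(* Positive literals read the first valuation and negative ones the second,
   so the condition on the second valuation is phrased through negation. *)
Lemma contrajoin_mono (r : border) (v v' w w' : valuation B S) e phi :
  vle r v v' -> (forall A, le_of r (neg (w A)) (neg (w' A))) ->
  le_of r (contrajoin v w e phi) (contrajoin v' w' e phi).
Proof.
  intros Hv Hw. revert e. induction phi; intro e; cbn [contrajoin].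
  - unfold look. destruct b, excluded_middle_informative; auto using le_of_refl.
  - apply le_of_refl.
  - apply le_of_refl.
  - apply bin_mono; auto.
  - apply bin_mono; auto.
  - apply bin_mono; auto.
  - apply bin_mono; auto.
  - apply (big_mono Tjoin). auto.
  - apply (big_mono Tmeet). auto.
Qed.

Lemma Psi_mono (r : border) (a : alpha) (y y' v v' : valuation B S) :
  vle r y y' -> (forall A, le_of r (neg (v A)) (neg (v' A))) ->
  vle r (Psi prog a y v) (Psi prog a y' v').
Proof.
  intros Hy Hv A. unfold Psi.
  destruct find_clause; [apply contrajoin_mono; assumption | apply le_of_refl].
Qed.

Lemma Psi_mono_k (a : alpha) (y y' v v' : valuation B S) :
  vle OrdK y y' -> vle OrdK v v' -> vle OrdK (Psi prog a y v) (Psi prog a y' v').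
Proof. intros Hy Hv. apply Psi_mono; [assumption | intro A; apply neg_mono_k, Hv]. Qed.

Lemma Psi_aU_le (a : alpha) (y v : valuation B S) :
  vle OrdK (Psi prog aU y v) (Psi prog a y v).
Proof. intro A. unfold Psi. destruct find_clause; [apply le_of_refl | apply bU_least]. Qed.

(* Psi'^alpha is a least fixpoint for this order: the greatest fixpoints of
   the cases T and I are least fixpoints for the dual orders. *)
Definition alpha_le (a : alpha) : B -> B -> Prop :=
  match a with
  | aF => @le_t B
  | aT => fun x y => le_t y x
  | aU => @le_k B
  | aI => fun x y => le_k y x
  end.

Definition alpha_op (a : alpha) : bop :=
  match a with aF => Tjoin | aT => Tmeet | aU => Kjoin | aI => Kmeet end.

Lemma complete_lattice_alpha (a : alpha) :
  complete_lattice (alpha_le a) (big (alpha_op a)).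
Proof.
  destruct HB as [pot [pok [glbt [lubt [glbk [lubk _]]]]]].
  destruct a; simpl.
  - split; assumption.
  - apply complete_lattice_dual; assumption.
  - split; assumption.
  - apply complete_lattice_dual; assumption.
Qed.

Lemma Psi_mono_alpha (a : alpha) (v y y' : valuation B S) :
  pointwise (alpha_le a) y y' ->
  pointwise (alpha_le a) (Psi prog a y v) (Psi prog a y' v).
Proof.
  intro Hy. destruct a;
    [ apply (Psi_mono OrdT) | intro A; apply (Psi_mono OrdT)
    | apply (Psi_mono OrdK) | intro A; apply (Psi_mono OrdK) ];
    auto using le_of_refl.
Qed.

Definition Psi' (a : alpha) (v : valuation B S) : valuation B S :=
  lfp (pointwise_join (big (alpha_op a))) (fun y => Psi prog a y v).

Lemma Psi'_is_iff (a : alpha) (v x : valuation B S) :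
  Psi'_is prog a v x <->
  is_fix (fun y => Psi prog a y v) x /\
  forall y, is_fix (fun y => Psi prog a y v) y -> pointwise (alpha_le a) x y.
Proof. destruct a; reflexivity. Qed.

Lemma Psi'_is_Psi' (a : alpha) (v : valuation B S) : Psi'_is prog a v (Psi' a v).
Proof.
  pose proof (complete_lattice_pointwise (gatom S) (complete_lattice_alpha a)) as HL.
  apply Psi'_is_iff. split.
  - intro A.
    exact (f_equal (fun z => z A) (eq_sym (lfp_fixed HL _ (Psi_mono_alpha a v)))).
  - intros y Hy. apply (lfp_least HL _ (Psi_mono_alpha a v)).
    intro A. rewrite Hy. apply (proj1 (proj1 (complete_lattice_alpha a))).
Qed.

Lemma Psi'_is_unique (a : alpha) (v x : valuation B S) :
  Psi'_is prog a v x -> x = Psi' a v.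
Proof.
  rewrite !Psi'_is_iff. intros [Hfix Hleast].
  destruct (Psi'_is_iff a v (Psi' a v)) as [HPsi' _].
  destruct (HPsi' (Psi'_is_Psi' a v)) as [Hfix' Hleast'].
  destruct (complete_lattice_pointwise (gatom S) (complete_lattice_alpha a))
    as [[_ [_ antisym]] _].
  apply antisym; auto.
Qed.

Lemma Psi'_mono_k (a : alpha) (v v' : valuation B S) :
  vle OrdK v v' -> vle OrdK (Psi' a v) (Psi' a v').
Proof.
  intro Hv.
  pose proof (complete_lattice_pointwise (gatom S) (complete_lattice_alpha a)) as HL.
  apply (lfp_ind2 HL HL (Psi_mono_alpha a v) (Psi_mono_alpha a v') (vle OrdK)).
  - intros y y' Hy. apply Psi_mono_k; assumption.
  - intros I y y' Hy A. apply big_mono. intro i. apply Hy.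
Qed.

Definition fixU (a : alpha) : valuation B S :=
  lfp (pointwise_join (@bigKjoin B)) (Psi' a).

Lemma complete_lattice_vle_k :
  complete_lattice (@vle B S OrdK) (pointwise_join (@bigKjoin B)).
Proof. exact (complete_lattice_pointwise (gatom S) (complete_lattice_alpha aU)). Qed.

Lemma fixU_is_Fix_U (a : alpha) : Fix_U prog a (fixU a).
Proof.
  assert (Hfix : fixU a = Psi' a (fixU a)).
  { exact (lfp_fixed complete_lattice_vle_k _ (Psi'_mono_k a)). }
  split.
  - pose proof (Psi'_is_Psi' a (fixU a)) as H. rewrite <- Hfix in H. exact H.
  - intros v Hv. apply (lfp_least complete_lattice_vle_k _ (Psi'_mono_k a)).
    rewrite <- (Psi'_is_unique a v v Hv). intro A. apply le_of_refl.
Qed.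

Lemma fixU_aU_le (a : alpha) : vle OrdK (fixU aU) (fixU a).
Proof.
  apply (lfp_least complete_lattice_vle_k _ (Psi'_mono_k aU)).
  apply (lfp_least complete_lattice_vle_k _ (Psi_mono_alpha aU (fixU a))).
  destruct (fixU_is_Fix_U a) as [Hfix _].
  apply Psi'_is_iff in Hfix. destruct Hfix as [Hfix _].
  intro A. specialize (Hfix A). cbv beta in Hfix |- *.
  rewrite <- Hfix. apply Psi_aU_le.
Qed.

End FittingSemantics.

Arguments fixU {B S} prog a.

Theorem theorem5 (B : Bilattice) (S : Signature) (prog : list (clause B S))
    (HB : bilattice_axioms B) (HP : fitting_program prog) :
  exists zU zF zT : valuation B S,
    Fix_U prog aU zU /\ Fix_U prog aF zF /\ Fix_U prog aT zT /\
    vle OrdK zU zF /\ vle OrdK zU zT.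
Proof.
  pose proof (fixU_is_Fix_U B S prog HB) as Hfix.
  pose proof (fixU_aU_le B S prog HB) as Hle.
  exists (fixU prog aU), (fixU prog aF), (fixU prog aT).
  exact (conj (Hfix aU) (conj (Hfix aF) (conj (Hfix aT) (conj (Hle aF) (Hle aT))))).
Qed.
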